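(* Let $X:\mathbb{N}\to\mathbf{Set}_*$ be a tower of pointed sets, $A$ an abelian group, $m\ge2$ an integer, $h\in G(X,A)$, and $x_1,\dots,x_l\in\lim_\mathbb{N}X$. Suppose that for every $n\in\mathbb{N}$ and every $a\in\mathrm{supp}(h(n))\setminus\{x_1(n),\dots,x_l(n)\}$ we have $h(n)_a\in mA$. Then $[h]\in mH(X,A)$.
   Context: $\mathbb{N}$ is regarded as a category with a single morphism $n\to m$ whenever $n\ge m$. For a pointed set $Y$, $Y\wedge A:=\bigoplus_{Y\setminus\{*\}}A$, whose elements are finitely supported pointed maps $y:Y\to A$, $s\mapsto y_s$, with $\mathrm{supp}(y)=\{s:y_s\ne0\}$; functorial via $f_*(sv)=f(s)v$, where $sv$ is the element with value $v$ at $s$ ($*v=0$). $G(X,A):=\lim_\mathbb{N}(X\wedge A)$; $K(X,A)$ is the image of the injective natural map $\rho:(\lim_\mathbb{N}X)\wedge A\to G(X,A)$, $\rho(xv)(n)=x(n)v$; $H(X,A):=G(X,A)/K(X,A)$, and $[h]$ denotes the class of $h\in G(X,A)$ in $H(X,A)$. *)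

From HB Require Import structures.
From mathcomp Require Import all_boot all_algebra.
Set Implicit Arguments. Unset Strict Implicit. Unset Printing Implicit Defensive.
Import GRing.Theory.
Local Open Scope ring_scope.

(* The carriers are eqTypes (classically every set has
   decidable equality). *)
Record tower := Tower {
  obj :> nat -> eqType;
  pt : forall n, obj n;
  bond : forall n, obj n.+1 -> obj n;
  bond_pt : forall n, bond (pt n.+1) = pt n }.

(* y is an element of Y /\ A : a pointed map Y -> A with finite support. *)
Definition smash (T : eqType) (p : T) (A : zmodType) (y : T -> A) : Prop :=
  y p = 0 /\ exists s : seq T, forall a, y a != 0 -> a \in s.

Definition covers (T : eqType) (A : zmodType) (y : T -> A) (s : seq T) : Prop :=
  uniq s /\ forall a, y a != 0 -> a \in s.

(* z = f_* y, where f_*(s v) = f(s) v and * v = 0 *)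
Definition is_push (S T : eqType) (pT : T) (A : zmodType) (f : S -> T)
  (y : S -> A) (z : T -> A) : Prop :=
  z pT = 0 /\
  forall t, t != pT -> forall s, covers y s -> z t = \sum_(a <- s | f a == t) y a.

(* h \in G(X,A) = lim_N (X /\ A) *)
Definition inG (X : tower) (A : zmodType) (h : forall n, X n -> A) : Prop :=
  (forall n, smash (pt X n) (h n)) /\
  (forall n, is_push (pt X n) (@bond X n) (h n.+1) (h n)).

Definition thread (X : tower) :=
  {x : forall n, X n | forall n, @bond X n (x n.+1) = x n}.

(* h \in K(X,A) = image of rho : (lim X) /\ A -> G(X,A):
   h = rho (sum_i x_i v_i), i.e. h(n) = sum_i x_i(n) v_i. *)
Definition inK (X : tower) (A : zmodType) (h : forall n, X n -> A) : Prop :=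
  exists xs : seq (thread X * A),
    forall n, h n (pt X n) = 0 /\
      forall t, t != pt X n -> h n t = \sum_(p <- xs | sval p.1 n == t) p.2.

(* [h] \in m H(X,A): h - m g \in K(X,A) for some g \in G(X,A) *)
Definition in_mH (X : tower) (A : zmodType) (m : nat) (h : forall n, X n -> A) : Prop :=
  exists g : forall n, X n -> A, inG g /\ inK (fun n a => h n a - g n a *+ m).

From mathcomp Require Import all_boot all_algebra.
From Stdlib Require List.
From Stdlib Require Import ClassicalEpsilon Classical.
Set Implicit Arguments. Unset Strict Implicit. Unset Printing Implicit Defensive.
Import GRing.Theory.
Local Open Scope ring_scope.

(* The proof is an induction on the list of exceptional threads.
   - No exceptional thread ([divide_G]): a compatible family all of whose
     coefficients lie in mA is m times a compatible family.  The quotient is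
     built level by level; in each fibre of a bonding map one representative
     point absorbs the correction that makes the quotient push forward.
   - A thread x equal to the base-point thread or to another exceptional
     thread is redundant ([mult_off_drop]).  Otherwise x eventually separates
     from all of them ([eventually_apart]); from then on the coefficient of h
     along x changes by elements of mA ([step_mult]), so subtracting
     rho(x c), with c the coefficient of h at x at a late level, removes x
     from the list ([mult_off_peel]).  Since rho(x c) \in K(X,A), this does
     not change the class of h ([in_mH_shift]). *)

Section Multiples.
Variables (A : zmodType) (m : nat).

Definition is_mult (v : A) : Prop := exists b : A, v = b *+ m.

Lemma is_mult0 : is_mult 0.
Proof. by exists 0; rewrite mul0rn. Qed.

Lemma is_multD u v : is_mult u -> is_mult v -> is_mult (u + v).
Proof. by move=> [a ->] [b ->]; exists (a + b); rewrite mulrnDl. Qed.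

Lemma is_multN u : is_mult u -> is_mult (- u).
Proof. by move=> [a ->]; exists (- a); rewrite mulNrn. Qed.

Lemma is_multB u v : is_mult u -> is_mult v -> is_mult (u - v).
Proof. by move=> mu mv; apply: is_multD mu (is_multN mv). Qed.

Lemma is_mult_sum (I : Type) (r : seq I) (P : pred I) (F : I -> A) :
  (forall i, P i -> is_mult (F i)) -> is_mult (\sum_(i <- r | P i) F i).
Proof. by move=> mF; apply: big_ind => //; [exact: is_mult0 | exact: is_multD]. Qed.

Lemma is_mult_telescope (u : nat -> A) M :
  (forall j, (M <= j)%N -> is_mult (u j.+1 - u j)) ->
  forall j, (M <= j)%N -> is_mult (u j - u M).
Proof.
move=> incr; elim=> [|j IH]; first by rewrite leqn0 => /eqP ->; rewrite subrr; exact: is_mult0.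
rewrite leq_eqVlt => /orP[/eqP <-|ltMj]; first by rewrite subrr; exact: is_mult0.
rewrite -(subrK (u j) (u j.+1)) -addrA.
by apply: is_multD; [apply: incr | apply: IH].
Qed.

End Multiples.

Section SupportSums.
Variables (T : eqType) (A : zmodType).
Implicit Types (y F : T -> A) (P : pred T) (s : seq T).

Lemma sum_support y P s :
  \sum_(a <- s | P a) y a = \sum_(a <- [seq a <- s | y a != 0] | P a) y a.
Proof.
rewrite big_filter_cond [RHS]big_mkcond [LHS]big_mkcond; apply: eq_bigr => a _.
by case: (P a); case: eqP => // ->; rewrite ?andbF.
Qed.

Lemma covers_sum y P s1 s2 :
  covers y s1 -> covers y s2 -> \sum_(a <- s1 | P a) y a = \sum_(a <- s2 | P a) y a.
Proof.
move=> [u1 c1] [u2 c2]; rewrite sum_support [RHS]sum_support; apply: perm_big.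
apply: uniq_perm; rewrite ?filter_uniq // => a; rewrite !mem_filter.
by case: (boolP (y a != 0)) => //= nz; rewrite (c1 _ nz) (c2 _ nz).
Qed.

Lemma covers_undup y r : (forall a, y a != 0 -> a \in r) -> covers y (undup r).
Proof. by move=> supp; split=> [|a /supp]; rewrite ?undup_uniq ?mem_undup. Qed.

Lemma smash_covers (p : T) y : smash p y -> exists s, covers y s.
Proof. by move=> [_ [s supp]]; exists (undup s); apply: covers_undup. Qed.

Lemma sum_split_at F P s j : uniq s -> j \in s -> P j ->
  \sum_(a <- s | P a) F a = F j + \sum_(a <- s | P a && (a != j)) F a.
Proof.
move=> us js Pj; rewrite big_mkcond (bigD1_seq j) //= Pj; congr (_ + _).
rewrite [RHS]big_mkcond [LHS]big_mkcond; apply: eq_bigr => a _.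
by case: (a != j); rewrite ?andbT ?andbF.
Qed.

End SupportSums.

Section GroupG.
Variables (X : tower) (A : zmodType).
Implicit Types (h e : forall n, X n -> A).

Lemma inG_sub h e : inG h -> inG e -> inG (fun n t => h n t - e n t).
Proof.
move=> [hs hp] [es ep]; split=> n.
  have [h0 [s1 supp1]] := hs n; have [e0 [s2 supp2]] := es n.
  split; first by rewrite h0 e0 subr0.
  exists (s1 ++ s2) => a; rewrite mem_cat.
  have [/eqP ->|/supp1 -> //] := boolP (h n a == 0).
  by rewrite sub0r oppr_eq0 => /supp2 ->; rewrite orbT.
split; first by rewrite (proj1 (hp n)) (proj1 (ep n)) subr0.
move=> t tn s cs.
have [_ [s1 supp1]] := hs n.+1; have [_ [s2 supp2]] := es n.+1.
pose u := undup (s ++ s1 ++ s2).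
rewrite (covers_sum _ cs (s2 := u)); last first.
  by apply: covers_undup => a /(proj2 cs) in_s; rewrite mem_cat in_s.
rewrite sumrB (proj2 (hp n) t tn u) ?(proj2 (ep n) t tn u) //.
  by apply: covers_undup => a /supp2 in_s2; rewrite !mem_cat in_s2 !orbT.
by apply: covers_undup => a /supp1 in_s1; rewrite !mem_cat in_s1 orbT.
Qed.

(* rho(x c), the image in G(X,A) of the element x c of (lim X) /\ A. *)
Definition rho_point (x : thread X) (c : A) (n : nat) (t : X n) : A :=
  if (t != pt X n) && (t == sval x n) then c else 0.
Arguments rho_point x c n t : clear implicits.

Lemma inG_rho_point x c : inG (rho_point x c).
Proof.
have cov n : covers (rho_point x c n) [:: sval x n].
  split=> // a; rewrite /rho_point inE.
  by case: andP => [[_ /eqP ->]|]; rewrite eqxx.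
split=> n; split; rewrite /rho_point ?eqxx //.
  by exists [:: sval x n]; apply: (proj2 (cov n)).
move=> t tn s cs; rewrite (covers_sum _ cs (cov n.+1)) big_cons big_nil addr0.
rewrite (svalP x n) /rho_point tn eqxx /= andbT eq_sym.
case: eqP => // xt; suff -> : sval x n.+1 != pt X n.+1 by [].
by apply: contra tn => /eqP xpt; rewrite -xt -(svalP x n) xpt bond_pt.
Qed.

End GroupG.
Arguments rho_point {X A} x c n t.

Section DivideByM.
Local Unset Implicit Arguments.
Variables (X : tower) (A : zmodType) (m : nat) (k : forall n, X n -> A).
Variable cov : forall n, seq (X n).
Variable D : forall n, X n -> A.

Definition fibre_rep n (t : X n) : X n.+1 :=
  nth (pt X n.+1) (cov n.+1)
    (find (fun a : X n.+1 => (bond a == t) && (k n.+1 a != 0)) (cov n.+1)).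

(* The quotient k / m, built level by level: off the support it vanishes, the
   representative of each fibre absorbs the difference between the quotient
   one level down and the m-th parts at the other points of the fibre. *)
Fixpoint quot n : X n -> A :=
  match n with
  | 0%N => D 0
  | n'.+1 => fun a =>
     if k n'.+1 a == 0 then 0 else
     if (bond a != pt X n') && (a == fibre_rep n' (bond a))
     then quot n' (bond a)
          - \sum_(a' <- cov n'.+1 | (bond a' == bond a) && (a' != a)) D n'.+1 a'
     else D n'.+1 a
  end.

Hypotheses (kG : inG k) (covP : forall n, covers (k n) (cov n)).
Hypotheses (DP : forall n a, k n a = D n a *+ m) (D0 : forall n a, k n a = 0 -> D n a = 0).

Lemma quot_supp n a : quot n a != 0 -> k n a != 0.
Proof.
case: n a => [|n] a /=; last by case: ifP => //; rewrite eqxx.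
by apply: contra_neq => /D0.
Qed.

Lemma quot_pt n : quot n (pt X n) = 0.
Proof. by apply/eqP; apply: contraT => /quot_supp; rewrite (proj1 (proj1 kG n)) eqxx. Qed.

Lemma quot_covers n : covers (quot n) (cov n).
Proof. by split=> [|a /quot_supp /(proj2 (covP n))]; first exact: (proj1 (covP n)). Qed.

Lemma quot_mul n a : k n a = quot n a *+ m.
Proof.
elim: n a => [|n IH] a /=; first exact: DP.
have [-> //|kn0] := eqP; first by rewrite mul0rn.
case: ifP => [/andP[tn /eqP ar]|_]; last exact: DP.
have ac : a \in cov n.+1 by apply: (proj2 (covP n.+1)); apply/eqP.
rewrite mulrnBl -IH (proj2 (proj2 kG n) _ tn _ (covP n.+1)).
rewrite (sum_split_at _ (proj1 (covP n.+1)) ac) ?eqxx //.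
by rewrite -sumrMnl -(eq_bigr _ (fun i _ => DP n.+1 i)) addrK.
Qed.

Lemma quot_push n : is_push (pt X n) (@bond X n) (quot n.+1) (quot n).
Proof.
split=> [|t tn s cs]; first exact: quot_pt.
rewrite (covers_sum _ cs (quot_covers n.+1)).
pose in_fibre a := (bond a == t) && (k n.+1 a != 0).
have [fib|no_fib] := boolP (has in_fibre (cov n.+1)).
  have /andP[/eqP br kr] := nth_find (pt X n.+1) fib; rewrite -/(fibre_rep n t) in br kr.
  have rc : fibre_rep n t \in cov n.+1 by apply: mem_nth; rewrite -has_find.
  have others : \sum_(a <- cov n.+1 | (bond a == t) && (a != fibre_rep n t)) quot n.+1 a
              = \sum_(a <- cov n.+1 | (bond a == t) && (a != fibre_rep n t)) D n.+1 a.
    apply: eq_bigr => a /andP[/eqP ba ar] /=; rewrite ba (negbTE ar) andbF.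
    by case: eqP => // /D0.
  rewrite (sum_split_at _ (proj1 (covP n.+1)) rc) ?br ?eqxx // others /=.
  by rewrite (negbTE kr) br tn eqxx /= subrK.
have k0 a : a \in cov n.+1 -> bond a == t -> k n.+1 a = 0.
  by move=> ac ba; move/hasPn: no_fib => /(_ a ac); rewrite /in_fibre ba negbK => /eqP.
rewrite big1_seq => [|a /andP[ba ac]]; last first.
  by apply/eqP; apply: contraT => /quot_supp; rewrite (k0 a ac ba) eqxx.
apply/eqP; apply: contraT => /quot_supp; rewrite (proj2 (proj2 kG n) t tn _ (covP n.+1)).
by rewrite big1_seq ?eqxx // => a /andP[ba ac]; apply: k0.
Qed.

Lemma quot_inG : inG quot.
Proof.
split=> n; last exact: quot_push.
by split; [exact: quot_pt | exists (cov n); exact: (proj2 (quot_covers n))].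
Qed.

End DivideByM.
Arguments quot {X A} k cov D n.

Lemma divide_G (X : tower) (A : zmodType) (m : nat) (k : forall n, X n -> A) :
  inG k -> (forall n a, k n a != 0 -> is_mult m (k n a)) ->
  exists g, inG g /\ forall n a, k n a = g n a *+ m.
Proof.
move=> kG kmult.
have cov_ex n : {s : seq (X n) | covers (k n) s}.
  by apply: constructive_indefinite_description; apply: smash_covers (proj1 kG n).
have D_ex n (a : X n) : {b : A | k n a = b *+ m /\ (k n a = 0 -> b = 0)}.
  apply: constructive_indefinite_description.
  have [->|nz] := eqVneq (k n a) 0; first by exists 0; rewrite mul0rn.
  have [b kb] := kmult n a nz.
  by exists b; split=> // k0; rewrite k0 eqxx in nz.
pose cov n := sval (cov_ex n).
pose D n a := sval (D_ex n a).
have covP n : covers (k n) (cov n) := svalP (cov_ex n).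
have DP n a : k n a = D n a *+ m := proj1 (svalP (D_ex n a)).
have D0 n a : k n a = 0 -> D n a = 0 := proj2 (svalP (D_ex n a)).
by exists (quot k cov D); split; [apply: quot_inG | move=> n a; apply: quot_mul].
Qed.

(* Boolean [all] versus membership in a list of threads (not an eqType). *)
Lemma all_In (T : Type) (p : pred T) (s : seq T) :
  all p s <-> forall y, List.In y s -> p y.
Proof. exact: List.forallb_forall. Qed.

Section Threads.
Variable X : tower.
Implicit Types (x y : thread X) (ys : seq (thread X)).

Definition base_thread : thread X := exist _ (pt X) (@bond_pt X).

Lemma agree_down x y i n : (i <= n)%N -> sval x n = sval y n -> sval x i = sval y i.
Proof.
move=> le_in; rewrite -(subnKC le_in); elim: (n - i)%N => [|d IH]; first by rewrite addn0.
by rewrite addnS => xy; apply: IH; rewrite -(svalP x) -(svalP y) xy.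
Qed.

Lemma eventually_apart x ys :
  (forall y, List.In y ys -> exists n, sval y n <> sval x n) ->
  exists N, forall y, List.In y ys -> forall n, (N <= n)%N -> sval y n <> sval x n.
Proof.
elim: ys => [|y ys IH] apart; first by exists 0%N.
have [ny yx] := apart y (or_introl erefl).
have [N HN] := IH (fun z zys => apart z (or_intror zys)).
exists (maxn ny N) => z [<-|zys] n le_n.
  by move=> /(agree_down (leq_trans (leq_maxl _ _) le_n)).
exact: HN zys n (leq_trans (leq_maxr _ _) le_n).
Qed.

End Threads.

Section ExceptionalThreads.
Variables (X : tower) (A : zmodType) (m : nat).
Implicit Types (h : forall n, X n -> A) (x : thread X) (xs : seq (thread X)).

Definition mult_off h xs : Prop :=
  forall n (a : X n), h n a != 0 ->
    all (fun x : thread X => a != sval x n) xs -> is_mult m (h n a).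

Definition apart_at x xs (j : nat) : Prop :=
  forall y, List.In y (base_thread X :: xs) -> sval y j <> sval x j.

Lemma apart_at_down x xs n j : (n <= j)%N -> apart_at x xs n -> apart_at x xs j.
Proof. by move=> le_nj apart y yin /(agree_down le_nj); exact: apart y yin. Qed.

(* Where x is apart from the other threads, the coefficient of h along x
   changes by an element of mA from one level to the next: the other points
   of the fibre over x(j) carry coefficients in mA. *)
Lemma step_mult h x xs j : inG h -> mult_off h (x :: xs) -> apart_at x xs j ->
  is_mult m (h j.+1 (sval x j.+1) - h j (sval x j)).
Proof.
move=> [hs hp] hyp apart.
have xpt : sval x j != pt X j.
  by apply/eqP => /esym; apply: apart (base_thread X) (or_introl erefl).
have [s cs] := smash_covers (hs j.+1).
have cu : covers (h j.+1) (undup (sval x j.+1 :: s)).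
  by apply: covers_undup => a /(proj2 cs) in_s; rewrite inE in_s orbT.
have xu : sval x j.+1 \in undup (sval x j.+1 :: s) by rewrite mem_undup mem_head.
rewrite (proj2 (hp j) _ xpt _ cu) (sum_split_at _ (proj1 cu) xu) ?(svalP x j) //.
rewrite opprD addrA subrr add0r; apply/is_multN/is_mult_sum => a /andP[/eqP ba ax].
have [/eqP ->|nz] := boolP (h j.+1 a == 0); first exact: is_mult0.
apply: hyp nz _; rewrite /= ax; apply/all_In => y yin; apply/eqP => ay.
by apply: (apart y); [right | rewrite -ba ay (svalP y j)].
Qed.

Lemma mult_off_drop h x xs y : inG h -> mult_off h (x :: xs) ->
  List.In y (base_thread X :: xs) -> (forall n, sval y n = sval x n) -> mult_off h xs.
Proof.
move=> hG hyp yin yx n a nz axs; apply: (hyp n a nz); rewrite /= axs andbT -yx.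
case: yin => [<- /=|yxs]; last exact: (proj1 (all_In _ _) axs y yxs).
by apply: contra nz => /eqP ->; rewrite (proj1 (proj1 hG n)).
Qed.

Lemma mult_off_peel h x xs N : inG h -> mult_off h (x :: xs) ->
  (forall j, (N <= j)%N -> apart_at x xs j) ->
  mult_off (fun n t => h n t - rho_point x (h N (sval x N)) n t) xs.
Proof.
move=> hG hyp apartN n a; rewrite /rho_point.
have hpt : h n (pt X n) = 0 by exact: (proj1 (proj1 hG n)).
case: andP => [[apt /eqP ax] _ axs|not_x]; last first.
  rewrite subr0 => nz axs; apply: (hyp n a nz); rewrite /= axs andbT.
  apply/eqP => ax; apply: not_x; split; last by rewrite ax.
  by apply: contra_neq nz => ->.
subst a; have apart_n : apart_at x xs n.
  move=> y [<- /= ptx|yxs yx]; first by rewrite ptx eqxx in apt.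
  by have := proj1 (all_In _ _) axs y yxs; rewrite yx eqxx.
pose u j := h j (sval x j).
have incr j : (minn n N <= j)%N -> is_mult m (u j.+1 - u j).
  rewrite geq_min => /orP[le_nj|le_Nj]; apply: step_mult hG hyp _.
    exact: apart_at_down le_nj apart_n.
  exact: apartN.
have := is_multB (is_mult_telescope incr (geq_minl n N)) (is_mult_telescope incr (geq_minr n N)).
by rewrite opprB addrA subrK.
Qed.

(* rho(x c) lies in K(X,A), so it does not change the class in H(X,A). *)
Lemma in_mH_shift h x c :
  in_mH m (fun n t => h n t - rho_point x c n t) -> in_mH m h.
Proof.
move=> [g [gG [ys Hys]]]; exists g; split=> //; exists ((x, c) :: ys) => n.
have [H0 Ht] := Hys n; split; first by move: H0; rewrite /rho_point eqxx subr0.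
move=> t tn; rewrite big_cons /= -(Ht t tn) /rho_point tn /= eq_sym.
by case: (t == sval x n); rewrite ?subr0 // (addrAC (h n t)) [c + _]addrC subrK.
Qed.

End ExceptionalThreads.

Lemma in_mH_of_mult_off (X : tower) (A : zmodType) (m : nat) (xs : seq (thread X)) :
  forall h : forall n, X n -> A, inG h -> mult_off m h xs -> in_mH m h.
Proof.
elim: xs => [|x xs IH] h hG hyp.
  have [g [gG hg]] := divide_G hG (fun n a nz => hyp n a nz erefl).
  by exists g; split=> //; exists [::] => n; split=> [|t _]; rewrite -hg subrr ?big_nil.
have [[y [yin yx]]|not_redundant] :=
  classic (exists y, List.In y (base_thread X :: xs) /\ forall n, sval y n = sval x n).
  exact: IH hG (mult_off_drop hG hyp yin yx).
have [N apartN] := eventually_apart (x := x) (ys := base_thread X :: xs) (fun y yin =>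
  not_all_ex_not _ _ (fun yx => not_redundant (ex_intro _ y (conj yin yx)))).
apply: (in_mH_shift (x := x) (c := h N (sval x N))).
apply: IH (inG_sub hG (inG_rho_point x _)) (mult_off_peel hG hyp _).
by move=> j le_Nj y yin; apply: apartN.
Qed.

(* Theorem 15. *)
Theorem mainTheorem15 (X : tower) (A : zmodType) (m : nat) (hm : (2 <= m)%N)
  (h : forall n, X n -> A) (hG : inG h) (xs : seq (thread X))
  (hyp : forall n (a : X n), h n a != 0 ->
           all (fun x : thread X => a != sval x n) xs ->
           exists b : A, h n a = b *+ m) :
  in_mH m h.
Proof. exact: in_mH_of_mult_off hG hyp. Qed.
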